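(* For $\mu\in\mathbb{R}$, $\sigma>0$, $\alpha\in\mathbb{R}$, let $X\sim\mathcal{N}(\mu,\sigma)$ and define $I(\mu,\sigma,\alpha)=(\mu-\alpha)\left(1-F_X(\alpha)\right)+\sigma^2 f_X(\alpha)$. Then $I$ is always convex in $\mu$, i.e. $\frac{\partial^2}{\partial\mu^2}I(\mu,\sigma,\alpha)\ge0$, and $I$ is convex in $\sigma$, i.e. $\frac{\partial^2}{\partial\sigma^2}I(\mu,\sigma,\alpha)\ge0$, whenever $\alpha\le\mu-\sqrt{\tfrac32}\,\sigma$ or $\alpha\ge\mu+\sqrt{\tfrac32}\,\sigma$.
   Context: $\mathcal{N}(\mu,\sigma)$ denotes the normal distribution with mean $\mu$ and standard deviation $\sigma$; $f_X$ and $F_X$ are the density and cumulative distribution function of $X$ (which depend on $\mu,\sigma$). *)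

From Stdlib Require Import Reals.
From Coquelicot Require Export Coquelicot.
Open Scope R_scope.

Definition normal_pdf (mu sigma x : R) : R :=
  / (sigma * sqrt (2 * PI)) * exp (- (x - mu) ^ 2 / (2 * sigma ^ 2)).

Definition normal_cdf (mu sigma a : R) : R :=
  RInt_gen (normal_pdf mu sigma) (Rbar_locally m_infty) (at_point a).

Definition I_fun (mu sigma alpha : R) : R :=
  (mu - alpha) * (1 - normal_cdf mu sigma alpha)
  + sigma ^ 2 * normal_pdf mu sigma alpha.

From Stdlib Require Import Reals Lra Classical.
From Coquelicot Require Import Coquelicot.
Open Scope R_scope.

(* Standardising, F_X(alpha) = Phi((alpha - mu) / sigma) with Phi' = phi, and the
   derivatives of I collapse to dI/dmu = 1 - F_X(alpha) and dI/dsigma = sigma f_X(alpha).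
   Differentiating once more gives f_X(alpha) >= 0 in mu and
   f_X(alpha) ((alpha - mu) / sigma)^2 >= 0 in sigma.  The only analytic input is that
   the improper integral defining Phi converges: x |-> int_x^0 phi is nonincreasing and
   bounded, since phi t <= exp (t + 1). *)

Lemma filterlim_m_infty_nonincreasing (g : R -> R) (B : R) :
  (forall x y, x <= y -> g y <= g x) -> (forall x, g x <= B) ->
  exists l, filterlim g (Rbar_locally m_infty) (locally l).
Proof.
  intros Hg HB.
  destruct (completeness (fun v => exists x, v = g x)) as [l [Hub Hlub]].
  { exists B. intros v [x ->]. apply HB. }
  { exists (g 0), 0. reflexivity. }
  exists l. apply filterlim_locally. intros eps. pose proof (cond_pos eps).
  assert (Hx0 : exists x0, l - eps < g x0).
  { apply NNPP. intros Hno.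
    assert (l <= l - eps); [|lra].
    apply Hlub. intros v [x ->]. apply Rnot_lt_le. intros Hlt. apply Hno. exists x. exact Hlt. }
  destruct Hx0 as [x0 Hx0]. exists x0. intros x Hx.
  assert (g x0 <= g x) by (apply Hg; lra).
  assert (g x <= l) by (apply Hub; exists x; reflexivity).
  change (Rabs (g x - l) < eps). apply Rabs_def1; lra.
Qed.

Lemma is_RInt_gen_m_infty_of_filterlim (f : R -> R) (b l : R) :
  (forall x, ex_RInt f x b) ->
  filterlim (fun x => RInt f x b) (Rbar_locally m_infty) (locally l) ->
  is_RInt_gen f (Rbar_locally m_infty) (at_point b) l.
Proof.
  intros Hf Hlim P HP.
  apply (Filter_prod _ _ _ (fun x => P (RInt f x b)) (fun y => y = b)).
  - exact (Hlim P HP).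
  - reflexivity.
  - intros x y Hx ->. exists (RInt f x b). split; [|exact Hx].
    apply (RInt_correct (V:=R_CompleteNormedModule)), Hf.
Qed.

Lemma filterlim_RInt_of_is_RInt_gen_m_infty (f : R -> R) (b l : R) :
  is_RInt_gen f (Rbar_locally m_infty) (at_point b) l ->
  filterlim (fun x => RInt f x b) (Rbar_locally m_infty) (locally l).
Proof.
  intros Hf P HP. destruct (Hf P HP) as [Q S HQ HS HQS].
  unfold filtermap. apply (filter_imp Q); [|exact HQ]. intros x Hx.
  destruct (HQS x b Hx HS) as [y [Hy HPy]]. simpl in Hy.
  now rewrite (is_RInt_unique _ _ _ _ Hy).
Qed.

Lemma sqrt_2PI_gt_1 : 1 < sqrt (2 * PI).
Proof.
  rewrite <- sqrt_1. apply sqrt_lt_1_alt. pose proof PI2_1. lra.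
Qed.

Lemma normal_pdf_ge0 (m s x : R) : 0 < s -> 0 <= normal_pdf m s x.
Proof.
  intros Hs. pose proof sqrt_2PI_gt_1. unfold normal_pdf.
  apply Rmult_le_pos; [|apply Rlt_le, exp_pos].
  apply Rlt_le, Rinv_0_lt_compat, Rmult_lt_0_compat; lra.
Qed.

Lemma continuous_normal_pdf (m s x : R) : continuous (normal_pdf m s) x.
Proof.
  apply (ex_derive_continuous (normal_pdf m s)). unfold normal_pdf. auto_derive. easy.
Qed.

Lemma ex_RInt_normal_pdf (m s a b : R) : ex_RInt (normal_pdf m s) a b.
Proof.
  apply (ex_RInt_continuous (V:=R_CompleteNormedModule)).
  intros; apply continuous_normal_pdf.
Qed.

Lemma normal_pdf_standardize (m s y : R) :
  0 < s -> normal_pdf m s y = / s * normal_pdf 0 1 ((y - m) / s).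
Proof.
  intros Hs. pose proof sqrt_2PI_gt_1. unfold normal_pdf.
  replace (- ((y - m) / s - 0) ^ 2 / (2 * 1 ^ 2)) with (- (y - m) ^ 2 / (2 * s ^ 2))
    by (field; lra).
  field; lra.
Qed.

Lemma RInt_normal_pdf_standardize (m s a b : R) :
  0 < s -> RInt (normal_pdf m s) a b = RInt (normal_pdf 0 1) ((a - m) / s) ((b - m) / s).
Proof.
  intros Hs.
  rewrite (RInt_ext _ (fun y => scal (/ s) (normal_pdf 0 1 (/ s * y + - m / s)))).
  2:{ intros y _. rewrite normal_pdf_standardize by exact Hs.
      unfold scal; simpl; unfold mult; simpl. do 2 f_equal. field. lra. }
  rewrite (RInt_comp_lin (V:=R_CompleteNormedModule)) by apply ex_RInt_normal_pdf.
  f_equal; field; lra.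
Qed.

Lemma normal_pdf01_le_exp (t : R) : normal_pdf 0 1 t <= exp (t + 1).
Proof.
  pose proof sqrt_2PI_gt_1. unfold normal_pdf.
  assert (Hexp : exp (- (t - 0) ^ 2 / (2 * 1 ^ 2)) < exp (t + 1)).
  { apply exp_increasing. pose proof (pow2_ge_0 (t + 1)). lra. }
  assert (Hc : 0 < / (1 * sqrt (2 * PI)) <= 1).
  { rewrite Rmult_1_l. split; [apply Rinv_0_lt_compat; lra|].
    rewrite <- Rinv_1. apply Rinv_le_contravar; lra. }
  pose proof (exp_pos (- (t - 0) ^ 2 / (2 * 1 ^ 2))). nra.
Qed.

Lemma RInt_normal_pdf01_le (x : R) : x <= 0 -> RInt (normal_pdf 0 1) x 0 <= exp 1.
Proof.
  intros Hx.
  assert (Hi : is_RInt (fun t => exp (t + 1)) x 0 (exp (0 + 1) - exp (x + 1))).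
  { apply (is_RInt_derive (fun t => exp (t + 1))).
    - intros y _. auto_derive; [easy | now rewrite Rmult_1_l].
    - intros y _. apply (ex_derive_continuous (fun t => exp (t + 1))). auto_derive. easy. }
  apply Rle_trans with (exp (0 + 1) - exp (x + 1)).
  - rewrite <- (is_RInt_unique _ _ _ _ Hi).
    apply RInt_le; [exact Hx | apply ex_RInt_normal_pdf | eexists; exact Hi |].
    intros t _. apply normal_pdf01_le_exp.
  - pose proof (exp_pos (x + 1)). rewrite Rplus_0_l. lra.
Qed.

Lemma ex_RInt_gen_normal_pdf01 (z : R) :
  ex_RInt_gen (normal_pdf 0 1) (Rbar_locally m_infty) (at_point z).
Proof.
  destruct (filterlim_m_infty_nonincreasing (fun x => RInt (normal_pdf 0 1) x 0) (exp 1))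
    as [l Hl].
  - intros x y Hxy.
    rewrite <- (RInt_Chasles (V:=R_CompleteNormedModule) _ x y 0) by apply ex_RInt_normal_pdf.
    assert (0 <= RInt (normal_pdf 0 1) x y); [|unfold plus; simpl; lra].
    apply RInt_ge_0; [exact Hxy | apply ex_RInt_normal_pdf |].
    intros; apply normal_pdf_ge0; lra.
  - intros x. destruct (Rle_or_lt x 0) as [Hx | Hx]; [now apply RInt_normal_pdf01_le|].
    rewrite <- (opp_RInt_swap (V:=R_CompleteNormedModule)) by apply ex_RInt_normal_pdf.
    assert (0 <= RInt (normal_pdf 0 1) 0 x); [|pose proof (exp_pos 1); unfold opp; simpl; lra].
    apply RInt_ge_0; [lra | apply ex_RInt_normal_pdf |].
    intros; apply normal_pdf_ge0; lra.
  - apply (ex_RInt_gen_Chasles _ 0).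
    + exists l. apply is_RInt_gen_m_infty_of_filterlim; [|exact Hl].
      intros; apply ex_RInt_normal_pdf.
    + apply (ex_RInt_gen_at_point (V:=R_CompleteNormedModule)), ex_RInt_normal_pdf.
Qed.

Lemma normal_cdf01_Chasles (z : R) :
  normal_cdf 0 1 z = normal_cdf 0 1 0 + RInt (normal_pdf 0 1) 0 z.
Proof.
  unfold normal_cdf.
  rewrite <- (RInt_gen_at_point (normal_pdf 0 1) 0 z) by apply ex_RInt_normal_pdf.
  symmetry. apply (RInt_gen_Chasles (V:=R_CompleteNormedModule) _ 0).
  - apply ex_RInt_gen_normal_pdf01.
  - apply (ex_RInt_gen_at_point (V:=R_CompleteNormedModule)), ex_RInt_normal_pdf.
Qed.

Lemma is_derive_normal_cdf01 (z : R) : is_derive (normal_cdf 0 1) z (normal_pdf 0 1 z).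
Proof.
  apply (is_derive_ext (fun z => normal_cdf 0 1 0 + RInt (normal_pdf 0 1) 0 z)).
  { intros t. symmetry. apply normal_cdf01_Chasles. }
  rewrite <- (Rplus_0_l (normal_pdf 0 1 z)).
  apply (is_derive_plus (fun _ => normal_cdf 0 1 0)).
  { apply (is_derive_const (V:=R_NormedModule)). }
  apply (is_derive_RInt _ _ 0); [|apply continuous_normal_pdf].
  apply filter_forall. intros b.
  apply (RInt_correct (V:=R_CompleteNormedModule)), ex_RInt_normal_pdf.
Qed.

Lemma normal_cdf_standardize (m s a : R) :
  0 < s -> normal_cdf m s a = normal_cdf 0 1 ((a - m) / s).
Proof.
  intros Hs.
  assert (Hstd :
    filterlim (fun x => (x - m) / s) (Rbar_locally m_infty) (Rbar_locally m_infty)).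
  { intros P [M HM]. exists (m + s * M). intros x Hx. apply HM.
    apply (Rmult_lt_reg_l s); [exact Hs|]. unfold Rdiv.
    replace (s * ((x - m) * / s)) with (x - m) by (field; lra). lra. }
  unfold normal_cdf at 1. apply is_RInt_gen_unique.
  apply is_RInt_gen_m_infty_of_filterlim; [intros; apply ex_RInt_normal_pdf|].
  apply (filterlim_ext (fun x => RInt (normal_pdf 0 1) ((x - m) / s) ((a - m) / s))).
  { intros x. symmetry. apply RInt_normal_pdf_standardize, Hs. }
  refine (filterlim_comp _ _ _ _ (fun y => RInt (normal_pdf 0 1) y ((a - m) / s)) _ _ _ Hstd _).
  apply filterlim_RInt_of_is_RInt_gen_m_infty, (RInt_gen_correct (V:=R_CompleteNormedModule)).
  apply ex_RInt_gen_normal_pdf01.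
Qed.

Lemma is_derive_normal_pdf_mu (s a m : R) :
  s <> 0 -> is_derive (fun m => normal_pdf m s a) m (normal_pdf m s a * (a - m) / s ^ 2).
Proof.
  intros Hs. pose proof sqrt_2PI_gt_1. unfold normal_pdf.
  auto_derive; [easy|].
  replace (- ((a + - m) * ((a + - m) * 1)) * / (2 * (s * (s * 1))))
    with (- (a - m) ^ 2 / (2 * s ^ 2)) by (field; lra).
  field; lra.
Qed.

Lemma is_derive_normal_pdf_sigma (m a s : R) :
  s <> 0 -> is_derive (fun s => normal_pdf m s a) s
    (normal_pdf m s a * (- / s + (a - m) ^ 2 / s ^ 3)).
Proof.
  intros Hs. pose proof sqrt_2PI_gt_1. unfold normal_pdf.
  auto_derive.
  - repeat split; repeat apply Rmult_integral_contrapositive_currified; lra.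
  - replace (- ((a - m) * ((a - m) * 1)) * / (2 * (s * (s * 1))))
      with (- (a - m) ^ 2 / (2 * s ^ 2)) by (field; lra).
    field; lra.
Qed.

Lemma is_derive_normal_cdf_mu (s a m : R) :
  0 < s -> is_derive (fun m => normal_cdf m s a) m (- normal_pdf m s a).
Proof.
  intros Hs.
  apply (is_derive_ext (fun m => normal_cdf 0 1 ((a - m) / s))).
  { intros t. symmetry. now apply normal_cdf_standardize. }
  replace (- normal_pdf m s a) with (scal (- / s) (normal_pdf 0 1 ((a - m) / s))).
  2:{ rewrite (normal_pdf_standardize m s a) by exact Hs.
      unfold scal; simpl; unfold mult; simpl. ring. }
  apply (is_derive_comp (normal_cdf 0 1) (fun m => (a - m) / s)).
  - apply is_derive_normal_cdf01.
  - auto_derive; [easy | field; lra].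
Qed.

Lemma is_derive_normal_cdf_sigma (m a s : R) :
  0 < s -> is_derive (fun s => normal_cdf m s a) s (- ((a - m) / s) * normal_pdf m s a).
Proof.
  intros Hs.
  apply (is_derive_ext_loc (fun s => normal_cdf 0 1 ((a - m) / s))).
  { apply (filter_imp (fun t => 0 < t)); [|exact (open_gt 0 s Hs)].
    intros t Ht. symmetry. now apply normal_cdf_standardize. }
  replace (- ((a - m) / s) * normal_pdf m s a)
    with (scal (- (a - m) / s ^ 2) (normal_pdf 0 1 ((a - m) / s))).
  2:{ rewrite (normal_pdf_standardize m s a) by exact Hs.
      unfold scal; simpl; unfold mult; simpl. field; lra. }
  apply (is_derive_comp (normal_cdf 0 1) (fun s => (a - m) / s)).
  - apply is_derive_normal_cdf01.
  - auto_derive; [lra | field; lra].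
Qed.

Lemma is_derive_I_fun_mu (s a m : R) :
  0 < s -> is_derive (fun m => I_fun m s a) m (1 - normal_cdf m s a).
Proof.
  intros Hs. unfold I_fun.
  pose proof (is_derive_normal_cdf_mu s a m Hs) as HF.
  pose proof (is_derive_normal_pdf_mu s a m (Rgt_not_eq _ _ Hs)) as Hf.
  auto_derive; [split; [eexists; exact HF | split; [eexists; exact Hf | easy]] |].
  do 2 erewrite is_derive_unique by eassumption.
  field; lra.
Qed.

Lemma is_derive_I_fun_sigma (m a s : R) :
  0 < s -> is_derive (fun s => I_fun m s a) s (s * normal_pdf m s a).
Proof.
  intros Hs. unfold I_fun.
  pose proof (is_derive_normal_cdf_sigma m a s Hs) as HF.
  pose proof (is_derive_normal_pdf_sigma m a s (Rgt_not_eq _ _ Hs)) as Hf.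
  auto_derive; [split; [eexists; exact HF | split; [eexists; exact Hf | easy]] |].
  do 2 erewrite is_derive_unique by eassumption.
  field; lra.
Qed.

Lemma is_derive_n_2_of_is_derive (f f' : R -> R) (x d : R) :
  locally x (fun y => is_derive f y (f' y)) -> is_derive f' x d -> is_derive_n f 2 x d.
Proof.
  intros Hf Hd. simpl. apply (is_derive_ext_loc f'); [|exact Hd].
  apply (filter_imp (fun y => is_derive f y (f' y))); [|exact Hf].
  intros y Hy. symmetry. now apply is_derive_unique.
Qed.

Lemma is_derive_n_I_fun_mu (s a m : R) :
  0 < s -> is_derive_n (fun m => I_fun m s a) 2 m (normal_pdf m s a).
Proof.
  intros Hs. apply (is_derive_n_2_of_is_derive _ (fun m => 1 - normal_cdf m s a)).
  - apply filter_forall. intros t. now apply is_derive_I_fun_mu.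
  - pose proof (is_derive_normal_cdf_mu s a m Hs) as HF.
    auto_derive; [eexists; exact HF|].
    erewrite is_derive_unique by eassumption. ring.
Qed.

Lemma is_derive_n_I_fun_sigma (m a s : R) :
  0 < s -> is_derive_n (fun s => I_fun m s a) 2 s (normal_pdf m s a * ((a - m) / s) ^ 2).
Proof.
  intros Hs. apply (is_derive_n_2_of_is_derive _ (fun s => s * normal_pdf m s a)).
  - apply (filter_imp (fun t => 0 < t)); [|exact (open_gt 0 s Hs)].
    intros t Ht. now apply is_derive_I_fun_sigma.
  - pose proof (is_derive_normal_pdf_sigma m a s (Rgt_not_eq _ _ Hs)) as Hf.
    auto_derive; [eexists; exact Hf|].
    erewrite is_derive_unique by eassumption. field; lra.
Qed.

Theorem lemma5 (mu sigma alpha : R) (hsigma : 0 < sigma) :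
  (exists d : R, is_derive_n (fun m => I_fun m sigma alpha) 2 mu d /\ 0 <= d)
  /\
  ((alpha <= mu - sqrt (3 / 2) * sigma \/ alpha >= mu + sqrt (3 / 2) * sigma) ->
   exists d : R, is_derive_n (fun s => I_fun mu s alpha) 2 sigma d /\ 0 <= d).
Proof.
  split.
  - exists (normal_pdf mu sigma alpha). split.
    + now apply is_derive_n_I_fun_mu.
    + now apply normal_pdf_ge0.
  -
    intros _.
    exists (normal_pdf mu sigma alpha * ((alpha - mu) / sigma) ^ 2). split.
    + now apply is_derive_n_I_fun_sigma.
    + apply Rmult_le_pos; [now apply normal_pdf_ge0 | apply pow2_ge_0].
Qed.
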